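(* Let $w$ be a perfectly clustering Lyndon word over a totally ordered alphabet, with a palindromic special factorization $w=a_1\pi_1a_2\pi_2\cdots\pi_{k-1}a_k$. Then for every $i\in\{1,\dots,k\}$, the word $$a_i\pi_ia_{i+1}\cdots\pi_{k-1}a_k\,a_1\pi_1a_2\cdots a_{i-1}\pi_{i-1}$$ is the lexicographically smallest conjugate of $w$ beginning with the letter $a_i$.
   Context: A special factorization of $w$ is a factorization $w=a_1\pi_1a_2\cdots\pi_{k-1}a_k$ where the set of letters occurring in $w$ is $\{a_1<\cdots<a_k\}$ and $\pi_1,\dots,\pi_{k-1}$ are words; it is palindromic if every $\pi_i$ is a palindrome. Conjugates of $w$ are the words $yx$ where $w=xy$. Lexicographic order: a proper prefix is smaller. A Lyndon word is a primitive word strictly smaller than its other conjugates. For a primitive word $v$ of length $n$ with conjugates $v_1<\cdots<v_n$, $\mathrm{bw}(v)$ is the word formed by the last letters of $v_1,\dots,v_n$; $v$ is perfectly clustering if $\mathrm{bw}(v)$ is weakly decreasing. *)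

From HB Require Import structures.
From mathcomp Require Import all_boot all_order.
Set Implicit Arguments. Unset Strict Implicit. Unset Printing Implicit Defensive.
Import Order.TTheory.

Section Words.
Context {d : Order.disp_t} {T : orderType d}.

Fixpoint lex_le (s t : seq T) : bool :=
  match s, t with
  | [::], _ => true
  | _ :: _, [::] => false
  | x :: s', y :: t' => (x < y)%O || ((x == y) && lex_le s' t')
  end.

Definition lex_lt (s t : seq T) : bool := lex_le s t && (s != t).

Definition conjugate (v w : seq T) : Prop :=
  exists x y, w = x ++ y /\ v = y ++ x.

Definition primitive (w : seq T) : Prop :=
  ~ exists (u : seq T) (k : nat), 2 <= k /\ w = flatten (nseq k u).

Definition lyndon (w : seq T) : Prop :=
  primitive w /\ forall v, conjugate v w -> v != w -> lex_lt w v.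

Definition bw (v : seq T) : seq T :=
  match v with
  | [::] => [::]
  | x :: _ => map (last x) (sort lex_le (mkseq (fun i => rot i v) (size v)))
  end.

Definition perfectly_clustering (v : seq T) : Prop :=
  primitive v /\ sorted (fun x y => (y <= x)%O) (bw v).

(* blocks [a_1 pi_1; a_2 pi_2; ...; a_k] (pi_k := empty word) *)
Definition sf_blocks (a : seq T) (pi : seq (seq T)) : seq (seq T) :=
  [seq p.1 :: p.2 | p <- zip a (rcons pi [::])].

Definition special_factorization (w : seq T) (a : seq T) (pi : seq (seq T))
  : Prop :=
  [/\ sorted (fun x y => (x < y)%O) a,
      (forall x, (x \in w) = (x \in a)),
      size pi = (size a).-1 &
      w = flatten (sf_blocks a pi)].

Definition palindromic_special_factorization w a pi : Prop :=
  special_factorization w a pi /\ all (fun p => rev p == p) pi.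

End Words.

From mathcomp Require Import all_boot all_order zify.
Set Implicit Arguments. Unset Strict Implicit. Unset Printing Implicit Defensive.
Import Order.TTheory.

(** Read w cyclically and sort its n rotations.  The rotations beginning with
    a letter c occupy a block of consecutive ranks; perfect clustering says that
    the rotations ending with c also form a block, in the same relative order as
    the rotations they are shifted from.  Propagating this along w shows that
    the cyclic word is its own mirror image: for some e, positions m and e - m
    carry the same letter.

    Let s_j be the start of the least rotation beginning with a_j.  Mirroring
    a_j pi_j a_(j+1) and using that pi_j is a palindrome gives an occurrence of
    a_(j+1) pi_j.  As a_(j+1) > a_j, perfect clustering puts the rotation after
    this a_(j+1) below the one at s_j + 1; hence the positions s_j + 1, ...,
    s_j + |pi_j| also read pi_j, and each is beaten by a rotation with the same
    first letter, so none is the start of a least rotation.  Thus the n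
    positions s_j + t (t <= |pi_j|) are distinct and cover w, so the position
    after s_j + |pi_j| is some s_j', necessarily s_(j+1).  Since w is Lyndon,
    s_1 = 0, and by induction s_j is where a_j pi_j starts in the factorization. *)

Lemma size_flatten_nseq (T : Type) m (u : seq T) :
  size (flatten (nseq m u)) = m * size u.
Proof. by elim: m => //= m IH; rewrite size_cat IH mulSn. Qed.

Lemma nth_flatten_nseq (T : Type) (x0 : T) m (u : seq T) i :
  i < m * size u -> nth x0 (flatten (nseq m u)) i = nth x0 u (i %% size u).
Proof.
elim: m i => [|m IH] i //= i_lt; rewrite nth_cat.
case: ltnP => [i_lt_u|u_le_i]; first by rewrite modn_small.
rewrite IH; last by move: i_lt; rewrite mulSn; lia.
by rewrite -{2}(subnK u_le_i) modnDr.
Qed.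

Lemma nth_palindrome (T : Type) (x0 : T) (s : seq T) t : rev s = s -> t < size s ->
  nth x0 s t = nth x0 s (size s - t.+1).
Proof. by move=> pal t_lt; rewrite -{1}pal nth_rev. Qed.

Lemma big_ord_shift_periodic n (f : nat -> nat) :
  (forall s, f (s + n) = f s) -> \sum_(s < n) f s = \sum_(s < n) f s.+1.
Proof.
case: n f => [|n] f f_per; first by rewrite !big_ord0.
by rewrite big_ord_recl big_ord_recr /= addnC -(f_per 0).
Qed.

Lemma inj_iota_onto (f : nat -> nat) m :
  {in iota 0 m &, injective f} -> (forall p, p < m -> f p < m) ->
  forall t, t < m -> exists2 p, p < m & f p = t.
Proof.
move=> f_inj f_lt t t_lt.
have uniq_f : uniq (map f (iota 0 m)) by rewrite map_inj_in_uniq ?iota_uniq.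
have sub_f : {subset map f (iota 0 m) <= iota 0 m}.
  by move=> x /mapP[p]; rewrite !mem_iota /= => p_lt ->; apply: f_lt.
have [_ eq_f] := uniq_min_size uniq_f sub_f (eq_leq (esym (size_map _ _))).
have /mapP[p] : t \in map f (iota 0 m) by rewrite eq_f mem_iota.
by rewrite mem_iota => p_lt ->; exists p.
Qed.

Lemma primitive_size_gt0 {d : Order.disp_t} {T : orderType d} (w : seq T) :
  primitive w -> 0 < size w.
Proof. by case: w => // prim; case: prim; exists [::], 2. Qed.

Section LexOrder.
Context {d : Order.disp_t} {T : orderType d}.
Implicit Types s t u : seq T.

Lemma lex_le_refl s : lex_le s s.
Proof. by elim: s => //= x s ->; rewrite eqxx ltxx. Qed.

Lemma lex_le_trans t s u : lex_le s t -> lex_le t u -> lex_le s u.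
Proof.
elim: s t u => [//|x s IH] [//|y t] [//|z u] /=.
case/orP=> [xy|/andP[/eqP <- st]]; case/orP=> [yz|/andP[/eqP <- tu]].
- by rewrite (lt_trans xy yz).
- by rewrite xy.
- by rewrite yz.
- by rewrite eqxx (IH _ _ st tu) orbT.
Qed.

Lemma lex_le_total s t : lex_le s t || lex_le t s.
Proof.
elim: s t => [//|x s IH] [|y t] //=.
by case: (ltgtP x y) => //= ->; rewrite eqxx IH.
Qed.

Lemma lex_le_anti s t : lex_le s t -> lex_le t s -> s = t.
Proof.
elim: s t => [|x s IH] [|y t] //=.
by case: (ltgtP x y) => //= -> /IH h /h ->.
Qed.

Lemma lex_lt_irr s : lex_lt s s = false.
Proof. by rewrite /lex_lt eqxx andbF. Qed.

Lemma lex_lt_trans t s u : lex_lt s t -> lex_lt t u -> lex_lt s u.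
Proof.
move=> /andP[st ne_st] /andP[tu _]; rewrite /lex_lt (lex_le_trans st tu) /=.
by apply: contra ne_st => /eqP us; rewrite -us in tu; rewrite (lex_le_anti st tu).
Qed.

Lemma lex_lt_cons x s t : lex_lt (x :: s) (x :: t) = lex_lt s t.
Proof. by rewrite /lex_lt /= ltxx eqxx eqseq_cons eqxx. Qed.

Lemma lex_lt_rcons s t x : size s = size t ->
  lex_lt (rcons s x) (rcons t x) = lex_lt s t.
Proof.
elim: s t => [|y s IH] [|z t] //=; first by rewrite !lex_lt_irr.
move=> [/IH]; rewrite /lex_lt /= !eqseq_cons.
by case: (ltgtP y z) => //= -> ->.
Qed.

Lemma lex_le_take t s u m :
  lex_le s t -> lex_le t u -> take m s = take m u -> take m t = take m s.
Proof.
elim: m s t u => [|m IH] s t u; first by rewrite !take0.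
case: s => [|x s]; case: t => [|y t]; case: u => [|z u] //=.
move=> + + [zx su]; rewrite -{}zx.
by case: (ltgtP x y) => //= <- st tu; rewrite (IH _ _ _ st tu su).
Qed.

End LexOrder.

Section CyclicWord.
Context {d : Order.disp_t} {T : orderType d}.
Variables (x0 : T) (w : seq T).
Local Notation n := (size w).

Definition letter p := nth x0 w (p %% n).

Definition rotn p := mkseq (fun j => letter (p + j)) n.

Definition ltrot p s := lex_lt (rotn p) (rotn s).

Lemma eq_letter p q : p = q %[mod n] -> letter p = letter q.
Proof. by rewrite /letter => ->. Qed.

Lemma eq_rotn p q : p = q %[mod n] -> rotn p = rotn q.
Proof.
by move=> pq; apply: eq_mkseq => j; apply: eq_letter; rewrite -modnDml pq modnDml.
Qed.

Lemma ltrot_modl p s : ltrot (p %% n) s = ltrot p s.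
Proof. by rewrite /ltrot (eq_rotn (modn_mod p n)). Qed.

Lemma ltrot_modr p s : ltrot p (s %% n) = ltrot p s.
Proof. by rewrite /ltrot (eq_rotn (modn_mod s n)). Qed.

Lemma size_rotn p : size (rotn p) = n.
Proof. exact: size_mkseq. Qed.

Lemma nth_rotn p j : j < n -> nth x0 (rotn p) j = letter (p + j).
Proof. exact: nth_mkseq. Qed.

Lemma take_rotn p m : m <= n -> take m (rotn p) = mkseq (fun j => letter (p + j)) m.
Proof.
move=> m_le; apply: (@eq_from_nth _ x0); rewrite size_takel ?size_rotn ?size_mkseq //.
by move=> j j_lt; rewrite nth_take // nth_rotn ?nth_mkseq //; apply: leq_trans m_le.
Qed.

Lemma rot_rotn p : p <= n -> rot p w = rotn p.
Proof.
move=> p_le; apply: (@eq_from_nth _ x0); rewrite size_rot ?size_rotn // => j j_lt.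
rewrite nth_rotn // nth_cat size_drop /letter.
case: ltnP => [j_lt'|j_ge].
  by rewrite nth_drop modn_small //; lia.
rewrite nth_take; last by lia.
have -> : p + j = (j - (n - p)) + n by lia.
by rewrite modnDr modn_small //; lia.
Qed.

Lemma rotn0 : rotn 0 = w.
Proof. by rewrite -rot_rotn // rot0. Qed.

Lemma conjugate_rotn v : conjugate v w -> exists2 p, p <= n & v = rotn p.
Proof.
move=> [x [y [w_xy ->]]]; have x_le : size x <= n by rewrite w_xy size_cat leq_addr.
by exists (size x); rewrite // -rot_rotn // w_xy rot_size_cat.
Qed.

Definition period r := forall t, letter (t + r) = letter t.

Lemma period_size : period n.
Proof. by move=> t; apply: eq_letter; rewrite modnDr. Qed.

Lemma periodM m r : period r -> period (m * r).
Proof.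
move=> per_r; elim: m => [|m IH] t; first by rewrite mul0n addn0.
by rewrite mulSn addnA IH per_r.
Qed.

Lemma period_gcd r r' : period r -> period r' -> period (gcdn r r').
Proof.
elim/ltn_ind: r r' => r IH r' per_r per_r'; rewrite gcdnE.
case: eqP => [_|/eqP r_ne0]; first exact: per_r'.
apply: IH => //; first by rewrite ltn_mod lt0n.
move=> t; rewrite -(periodM (r' %/ r) per_r (t + r' %% r)) -addnA.
by rewrite [_ %% r + _]addnC -divn_eq per_r'.
Qed.

Definition n_lt c := \sum_(s < n) (letter s < c)%O.

Definition n_eq c := \sum_(s < n) (letter s == c).

Definition n_gt c := \sum_(s < n) (c < letter s)%O.

Definition rank p := \sum_(s < n) ltrot s p.

Definition rank_in_letter p := \sum_(s < n) ((letter s == letter p) && ltrot s p).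

Lemma n_lt_eq_gt c : n_lt c + n_eq c + n_gt c = n.
Proof.
rewrite -!big_split /= -[RHS]card_ord -sum1_card.
by apply: eq_bigr => s _; case: (ltgtP (letter s) c).
Qed.

Lemma n_lt_block c c' : (c < c')%O -> n_lt c + n_eq c <= n_lt c'.
Proof.
move=> cc'; rewrite -big_split; apply: leq_sum => s _ /=.
by case: (ltgtP (letter s) c) => [sc|//|->]; rewrite ?(lt_trans sc cc') ?cc'.
Qed.

Lemma n_gt_block c c' : (c < c')%O -> n_gt c' + n_eq c' <= n_gt c.
Proof.
move=> cc'; rewrite -big_split; apply: leq_sum => s _ /=.
by case: (ltgtP (letter s) c') => [//|sc|->]; rewrite ?(lt_trans cc' sc) ?cc'.
Qed.

Lemma lt_block_uniq c c' t : n_lt c <= t < n_lt c + n_eq c ->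
  n_lt c' <= t < n_lt c' + n_eq c' -> c = c'.
Proof.
by move=> t_c t_c'; case: (ltgtP c c') => // /n_lt_block; lia.
Qed.

Lemma gt_block_uniq c c' t : n_gt c <= t < n_gt c + n_eq c ->
  n_gt c' <= t < n_gt c' + n_eq c' -> c = c'.
Proof.
by move=> t_c t_c'; case: (ltgtP c c') => // /n_gt_block; lia.
Qed.

Lemma eq_rank p q : p = q %[mod n] -> rank p = rank q.
Proof. by move=> pq; apply: eq_bigr => s _; rewrite -ltrot_modr pq ltrot_modr. Qed.

Hypothesis w_gt0 : 0 < n.

Lemma rotn_cons p : rotn p = letter p :: behead (rotn p).
Proof. by rewrite /rotn /mkseq -(prednK w_gt0) /= ?addn0. Qed.

Lemma rotn_succ p : rotn p.+1 = rcons (behead (rotn p)) (letter p).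
Proof.
apply: (@eq_from_nth _ x0); first by rewrite size_rcons size_behead !size_rotn prednK.
rewrite size_rotn => j j_lt; rewrite nth_rcons size_behead size_rotn nth_rotn //.
case: ltnP => [j_lt'|j_ge]; first by rewrite nth_behead nth_rotn ?addSnnS //; lia.
have -> : j = n.-1 by lia.
by rewrite eqxx; apply: eq_letter; rewrite addSnnS prednK // modnDr.
Qed.

Lemma ohead_rotn p : ohead (rotn p) = Some (letter p).
Proof. by rewrite rotn_cons. Qed.

Lemma ltrot_irr p : ltrot p p = false.
Proof. exact: lex_lt_irr. Qed.

Lemma ltrot_trans q p s : ltrot p q -> ltrot q s -> ltrot p s.
Proof. exact: lex_lt_trans. Qed.

Lemma ltrot_asym p s : ltrot p s -> ltrot s p = false.
Proof. by move=> ps; apply/negP => /(ltrot_trans ps); rewrite ltrot_irr. Qed.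

Lemma ltrot_letter p s : (letter p < letter s)%O -> ltrot p s.
Proof.
move=> ps; rewrite /ltrot (rotn_cons p) (rotn_cons s) /lex_lt /= ps.
by rewrite eqseq_cons (lt_eqF ps).
Qed.

Lemma ltrot_succ p s : letter p = letter s -> ltrot p.+1 s.+1 = ltrot p s.
Proof.
move=> ps; rewrite /ltrot !rotn_succ ps lex_lt_rcons ?size_behead ?size_rotn //.
by rewrite [in RHS](rotn_cons p) [in RHS](rotn_cons s) ps lex_lt_cons.
Qed.

Lemma lex_le_rotn_succ p s : letter p = letter s ->
  lex_le (rotn p) (rotn s) -> lex_le (rotn p.+1) (rotn s.+1).
Proof.
move=> ps ps_le; have [eq_ps|ne_ps] := eqVneq (rotn p) (rotn s).
  by rewrite !rotn_succ eq_ps ps lex_le_refl.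
by have /andP[] : ltrot p.+1 s.+1 by rewrite ltrot_succ // /ltrot /lex_lt ps_le.
Qed.

Lemma ltrot_shift p s m : ltrot p s ->
  (forall t, t < m -> letter (p + t) = letter (s + t)) -> ltrot (p + m) (s + m).
Proof.
elim: m => [|m IH] ps eq_ps; first by rewrite !addn0.
by rewrite !addnS ltrot_succ ?IH // => [t t_lt|]; apply: eq_ps; lia.
Qed.

Lemma rank_first p : rank p = n_lt (letter p) + rank_in_letter p.
Proof.
rewrite -big_split; apply: eq_bigr => s _ /=.
case: (ltgtP (letter s) (letter p)) => [sp|ps|//].
- by rewrite ltrot_letter.
- by rewrite ltrot_asym // ltrot_letter.
Qed.

Lemma rank_in_letter_lt p : rank_in_letter p < n_eq (letter p).
Proof.
have p_lt : p %% n < n by rewrite ltn_mod.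
rewrite /rank_in_letter /n_eq (bigD1 (Ordinal p_lt)) //.
rewrite [in X in _ < X](bigD1 (Ordinal p_lt)) //=.
rewrite ltrot_modl ltrot_irr.
rewrite (eq_letter (modn_mod p n)) eqxx ltnS leq_sum // => s _.
by case: (_ == _); case: ltrot.
Qed.

Lemma rank_first_bounds p :
  n_lt (letter p) <= rank p < n_lt (letter p) + n_eq (letter p).
Proof. by rewrite rank_first leq_addr ltn_add2l rank_in_letter_lt. Qed.

Lemma rank_ltn p : rank p < n.
Proof. by have := rank_first_bounds p; have := n_lt_eq_gt (letter p); lia. Qed.

Lemma ltrot_rank p s : ltrot s p -> rank s < rank p.
Proof.
move=> sp; have s_lt : s %% n < n by rewrite ltn_mod.
rewrite /rank (bigD1 (Ordinal s_lt)) // [in X in _ < X](bigD1 (Ordinal s_lt)) //=.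
rewrite !ltrot_modl ltrot_irr sp ltnS.
by apply: leq_sum => t _; case ts: (ltrot t s); rewrite ?(ltrot_trans ts sp).
Qed.

Lemma period_flatten g : 0 < g -> g %| n -> period g ->
  flatten (nseq (n %/ g) (take g w)) = w.
Proof.
move=> g_gt0 g_dvd per_g; have g_le : g <= n := dvdn_leq w_gt0 g_dvd.
have size_g : size (take g w) = g by rewrite size_takel.
apply: (@eq_from_nth _ x0); first by rewrite size_flatten_nseq size_g divnK.
move=> i; rewrite size_flatten_nseq size_g divnK // => i_lt.
rewrite nth_flatten_nseq ?size_g ?divnK // nth_take ?ltn_mod //.
have := periodM (i %/ g) per_g (i %% g); rewrite addnC -divn_eq /letter.
have i_g_lt : i %% g < n by rewrite (leq_trans _ g_le) // ltn_mod.
by rewrite (modn_small i_lt) (modn_small i_g_lt) => ->.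
Qed.

Hypothesis w_prim : primitive w.

Lemma not_period r : 0 < r < n -> ~ period r.
Proof.
move=> /andP[r_gt0 r_lt] per_r; pose g := gcdn r n.
have g_gt0 : 0 < g by rewrite gcdn_gt0 r_gt0.
have g_dvd : g %| n := dvdn_gcdr r n.
have g_lt : g < n by apply: leq_ltn_trans r_lt; apply: dvdn_leq r_gt0 (dvdn_gcdl r n).
apply: w_prim; exists (take g w), (n %/ g); split.
  by have := divnK g_dvd; case: (n %/ g) => [|[|q]] //=; lia.
by rewrite period_flatten //; apply: period_gcd per_r period_size.
Qed.

Lemma rotn_period p s : p <= s -> rotn p = rotn s -> period (s - p).
Proof.
move=> ps eq_ps t.
have shift j : letter (p + j) = letter (s + j).
  rewrite -(eq_letter (modnDmr p j n)) -(eq_letter (modnDmr s j n)).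
  by rewrite -!nth_rotn ?ltn_mod // eq_ps.
have pn : p * n = p + p * n.-1 by rewrite -{1}(prednK w_gt0) mulnSr addnC.
have per_pn q : letter (q + p * n) = letter q by apply: eq_letter; rewrite addnC modnMDl.
rewrite -[LHS]per_pn.
have -> : t + (s - p) + p * n = s + (t + p * n.-1) by lia.
by rewrite -shift -(per_pn t); congr letter; lia.
Qed.

Lemma eq_rotn_mod p s : rotn p = rotn s -> p = s %[mod n].
Proof.
wlog ps : p s / p %% n <= s %% n.
  move=> H eq_ps; case: (leqP (p %% n) (s %% n)) => [ps|/ltnW sp]; first exact: H.
  exact/esym/H.
rewrite -(eq_rotn (modn_mod p n)) -(eq_rotn (modn_mod s n)) => /(rotn_period ps) per.
have s_lt : s %% n < n by rewrite ltn_mod.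
apply/eqP; rewrite eqn_leq ps leqNgt; apply/negP => sp.
by apply: (not_period _ per); lia.
Qed.

Lemma ltrot_total p s : p != s %[mod n] -> ltrot p s || ltrot s p.
Proof.
move=> ne_ps; have ne_rot : rotn p != rotn s by apply: contra ne_ps => /eqP/eq_rotn_mod ->.
by rewrite /ltrot /lex_lt ne_rot eq_sym ne_rot !andbT lex_le_total.
Qed.

Lemma rank_inj p s : rank p = rank s -> p = s %[mod n].
Proof.
move=> eq_ps; apply/eqP; apply: contraT => /ltrot_total.
by case/orP=> /ltrot_rank; rewrite eq_ps ltnn.
Qed.

Lemma lex_le_rank p s : rank s <= rank p -> lex_le (rotn s) (rotn p).
Proof.
move=> sp; have [eq_ps|ne_ps] := eqVneq (p %% n) (s %% n).
  by rewrite (eq_rotn eq_ps) lex_le_refl.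
case/orP: (ltrot_total ne_ps) => [/ltrot_rank|/andP[] //]; lia.
Qed.

Lemma rank_onto t : t < n -> exists2 p, p < n & rank p = t.
Proof.
apply: inj_iota_onto => [p q|p _]; last exact: rank_ltn.
by rewrite !mem_iota /= => p_lt q_lt /rank_inj; rewrite !modn_small.
Qed.

Definition least_rot p := rank p == n_lt (letter p).

Lemma eq_least_rot p q : p = q %[mod n] -> least_rot p = least_rot q.
Proof. by move=> pq; rewrite /least_rot (eq_rank pq) (eq_letter pq). Qed.

Lemma not_least_rot q p : ltrot q p -> letter q = letter p -> ~~ least_rot p.
Proof.
move=> qp eq_qp; rewrite /least_rot -eq_qp; apply/eqP => rank_p.
by have := ltrot_rank qp; have := rank_first_bounds q; lia.
Qed.

Definition least_pos c := find (fun p => rank p == n_lt c) (iota 0 n).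

Lemma least_pos_spec p :
  least_pos (letter p) < n /\ rank (least_pos (letter p)) = n_lt (letter p).
Proof.
have [q q_lt rank_q] : exists2 q, q < n & rank q = n_lt (letter p).
  by apply: rank_onto; have := rank_first_bounds p; have := n_lt_eq_gt (letter p); lia.
have has_q : has (fun p' => rank p' == n_lt (letter p)) (iota 0 n).
  by apply/hasP; exists q; rewrite ?mem_iota ?rank_q.
have := nth_find 0 has_q; rewrite has_find size_iota in has_q.
by rewrite nth_iota // add0n => /eqP.
Qed.

Lemma letter_least_pos p : letter (least_pos (letter p)) = letter p.
Proof.
have [_ rank_lp] := least_pos_spec p.
apply: (lt_block_uniq (rank_first_bounds _)).
by rewrite rank_lp; have := rank_first_bounds p; lia.
Qed.

Lemma least_rot_least_pos p : least_rot (least_pos (letter p)).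
Proof.
by have [_ rank_lp] := least_pos_spec p; rewrite /least_rot rank_lp letter_least_pos.
Qed.

Lemma lex_le_least_pos p : lex_le (rotn (least_pos (letter p))) (rotn p).
Proof.
apply: lex_le_rank; have [_ ->] := least_pos_spec p.
by have := rank_first_bounds p; lia.
Qed.

Hypothesis w_lyndon : lyndon w.

Lemma rank0 : rank 0 = 0.
Proof.
apply: big1 => -[s s_lt] _ /=; have [->|s_ne0] := eqVneq s 0; first by rewrite ltrot_irr.
suff /ltrot_asym -> : ltrot 0 s by [].
rewrite /ltrot rotn0; apply: w_lyndon.2.
  by exists (take s w), (drop s w); rewrite cat_take_drop -rot_rotn // ltnW.
apply: contra s_ne0; rewrite -{1}rotn0 => /eqP/eq_rotn_mod.
by rewrite mod0n modn_small // => <-.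
Qed.

Lemma least_pos_letter0 : least_pos (letter 0) = 0.
Proof.
have [lp_lt rank_lp] := least_pos_spec 0.
have : rank (least_pos (letter 0)) = rank 0.
  by rewrite rank_lp rank0; have := rank_first_bounds 0; rewrite rank0; lia.
by move/rank_inj; rewrite mod0n modn_small.
Qed.

Section PerfectlyClustering.
Hypothesis w_pc : sorted (fun x y => (y <= x)%O) (bw w).

Lemma ltrot_succ_letter p s : ltrot p.+1 s.+1 -> (letter s <= letter p)%O.
Proof.
move=> lt_ps; have [y [w' Ew]] : exists y w', w = y :: w'.
  by case: (w) w_gt0 => [//|y w' _]; exists y, w'.
have := w_pc; rewrite /bw Ew -Ew; set srt := sort _ _ => pc.
have mem_srt q : rotn q \in srt.
  rewrite mem_sort -(eq_rotn (modn_mod q n)) -rot_rotn; last by rewrite ltnW // ltn_mod.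
  by apply: map_f; rewrite mem_iota ltn_mod w_gt0.
have srt_sorted : sorted lex_le srt by apply: sort_sorted; apply: lex_le_total.
have ge_trans : transitive (fun x y : T => (y <= x)%O).
  by move=> ? ? ? xy yz; apply: le_trans yz xy.
have idx_lt q : index (rotn q) srt < size srt by rewrite index_mem.
have idx_le : index (rotn p.+1) srt <= index (rotn s.+1) srt.
  rewrite leqNgt; apply/negP => /ltnW.
  move/(sorted_leq_nth (@lex_le_trans d T) (@lex_le_refl d T) [::] srt_sorted).
  move=> /(_ (idx_lt _) (idx_lt _)); rewrite !nth_index // => sp.
  by move: lt_ps => /andP[ps]; rewrite (lex_le_anti ps sp) eqxx.
have := sorted_leq_nth ge_trans (@lexx _ _) y pc; rewrite size_map.
move=> /(_ _ _ (idx_lt _) (idx_lt _) idx_le).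
by rewrite !(nth_map [::]) // !nth_index // !rotn_succ !last_rcons.
Qed.

Lemma ltrot_succ_of_letter p s : (letter p < letter s)%O -> ltrot s.+1 p.+1.
Proof.
move=> ps; have ne_ps : p.+1 != s.+1 %[mod n].
  apply: contraTneq ps => /eq_rotn; rewrite !rotn_succ => /eqP.
  by rewrite eqseq_rcons => /andP[_ /eqP ->]; rewrite ltxx.
case/orP: (ltrot_total ne_ps) => // /ltrot_succ_letter sp.
by move: (lt_le_trans ps sp); rewrite ltxx.
Qed.

(* The last letters of the sorted rotations decrease, and rotations ending with
   the same letter keep the order of the rotations they are shifted from. *)
Lemma rank_succ p : rank p.+1 = n_gt (letter p) + rank_in_letter p.
Proof.
rewrite /rank (@big_ord_shift_periodic _ (fun s => ltrot s p.+1)); last first.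
  by move=> s; rewrite -ltrot_modl modnDr ltrot_modl.
rewrite -big_split; apply: eq_bigr => s _ /=.
case: (ltgtP (letter s) (letter p)) => [sp|ps|sp].
- by rewrite ltrot_asym // ltrot_succ_of_letter.
- by rewrite ltrot_succ_of_letter.
- by rewrite ltrot_succ.
Qed.

Lemma rank_succ_bounds p :
  n_gt (letter p) <= rank p.+1 < n_gt (letter p) + n_eq (letter p).
Proof. by rewrite rank_succ leq_addr ltn_add2l rank_in_letter_lt. Qed.

Lemma letter_mirror : exists e, forall m q, q + m = e %[mod n] -> letter q = letter m.
Proof.
have rank0_bounds := rank_first_bounds 0; set c := letter 0 in rank0_bounds *.
have [e _ rank_e] : exists2 e, e < n & rank e = 2 * n_lt c + n_eq c - (rank 0).+1.
  by apply: rank_onto; have := n_lt_eq_gt c; lia.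
exists e.
(* Mirrored positions have symmetric ranks inside the block of their common
   letter; the first- and last-letter blocks carry this from m to m + 1. *)
suff mirror m q : q + m = e %[mod n] ->
    letter q = letter m /\ rank q + rank m + 1 = 2 * n_lt (letter m) + n_eq (letter m).
  by move=> m q /mirror[].
elim: m q => [|m IH] q.
  rewrite addn0 => /eq_rank rank_q; rewrite rank_e in rank_q.
  have letter_q : letter q = c.
    apply: (lt_block_uniq (rank_first_bounds q)).
    by rewrite rank_q; lia.
  by rewrite letter_q -/c; split => //; lia.
rewrite -addSnnS => /IH[letter_q1 rank_q1].
have := rank_first m; have := rank_succ m; have := n_lt_eq_gt (letter m).
move=> count_m succ_m first_m.
have rank_q1' : rank q.+1 = n.-1 - rank m.+1 by lia.
have letter_q : letter q = letter m.+1.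
  apply: (gt_block_uniq (rank_succ_bounds q)); rewrite rank_q1'.
  by have := rank_first_bounds m.+1; have := n_lt_eq_gt (letter m.+1); lia.
have := rank_first q; have := rank_succ q; rewrite letter_q.
by have := n_lt_eq_gt (letter m.+1); split => //; lia.
Qed.

End PerfectlyClustering.

Section Factorization.
Variables (a : seq T) (pi : seq (seq T)).
Hypothesis size_pi : size pi = (size a).-1.
Hypothesis w_blocks : w = flatten (sf_blocks a pi).

Local Notation k := (size a).
Local Notation blocks := (sf_blocks a pi).

Definition pi_len j := size (nth [::] pi j).

Definition block_start j := sumn (take j (shape blocks)).

Lemma size_sf_blocks : size blocks = k.
Proof.
rewrite /sf_blocks size_map size_zip size_rcons size_pi.
by case: (size a) => //= m; rewrite minnn.
Qed.

Lemma nth_sf_blocks j : j < k -> nth [::] blocks j = nth x0 a j :: nth [::] pi j.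
Proof.
move=> j_lt; have size_rc : size (rcons pi [::]) = k.
  by rewrite size_rcons size_pi prednK // (leq_ltn_trans (leq0n j) j_lt).
rewrite /sf_blocks (nth_map (x0, [::])) ?size_zip ?size_rc ?minnn // nth_zip ?size_rc //=.
rewrite nth_rcons; case: ltnP => // pi_le; case: eqP => _.
all: by rewrite (nth_default _ pi_le).
Qed.

Lemma nth_shape_blocks j : j < k -> nth 0 (shape blocks) j = (pi_len j).+1.
Proof. by move=> j_lt; rewrite /shape (nth_map [::]) ?size_sf_blocks // nth_sf_blocks. Qed.

Lemma letter_block j t : j < k -> t <= pi_len j ->
  letter (block_start j + t) = nth x0 (nth x0 a j :: nth [::] pi j) t.
Proof.
move=> j_lt t_le; have t_lt : t < nth 0 (shape blocks) j by rewrite nth_shape_blocks.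
rewrite /letter modn_small; last by rewrite w_blocks size_flatten flatten_indexP.
by rewrite w_blocks nth_flatten flatten_indexKl // flatten_indexKr // nth_sf_blocks.
Qed.

Lemma block_end_lt j : j < k -> block_start j + pi_len j < n.
Proof.
move=> j_lt; rewrite w_blocks size_flatten; apply: flatten_indexP.
by rewrite nth_shape_blocks.
Qed.

Lemma letter_block_start j : j < k -> letter (block_start j) = nth x0 a j.
Proof. by move=> j_lt; rewrite -[block_start j]addn0 letter_block. Qed.

Lemma letter_block_pi j t : j < k -> t < pi_len j ->
  letter (block_start j + t.+1) = nth x0 (nth [::] pi j) t.
Proof. exact: letter_block. Qed.

Lemma block_start_succ j : j < k -> block_start j.+1 = block_start j + (pi_len j).+1.
Proof.
move=> j_lt; rewrite /block_start (take_nth 0) ?sumn_rcons ?nth_shape_blocks //.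
by rewrite size_map size_sf_blocks.
Qed.

Lemma succ_lt_of_pi_len j : 0 < pi_len j -> j.+1 < k.
Proof.
rewrite /pi_len; case: (ltnP j (size pi)) => [|pi_le]; last by rewrite nth_default.
by rewrite size_pi ltn_predRL.
Qed.

Lemma flatten_rot_blocks i : i < k -> flatten (rot i blocks) = rotn (block_start i).
Proof.
move=> i_lt; have start_lt := leq_ltn_trans (leq_addr _ _) (block_end_lt i_lt).
rewrite -rot_rotn; last exact: ltnW start_lt.
rewrite w_blocks -{2}(cat_take_drop i blocks) flatten_cat.
have -> : block_start i = size (flatten (take i blocks)).
  by rewrite size_flatten /shape map_take.
by rewrite rot_size_cat /rot flatten_cat.
Qed.

Hypothesis w_pc : sorted (fun x y => (y <= x)%O) (bw w).
Hypothesis pi_pal : all (fun p => rev p == p) pi.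

(* Reflect the factor a_j pi_j a_(j+1) through the mirror of [letter_mirror]. *)
Lemma mirror_block j : j < k -> 0 < pi_len j ->
  exists2 q, letter q = nth x0 a j.+1 &
    forall t, t < pi_len j -> letter (q + t.+1) = letter (block_start j + t.+1).
Proof.
move=> j_lt len_gt0; have j1_lt := succ_lt_of_pi_len len_gt0.
have [e mirror] := letter_mirror w_pc.
have start_le : block_start j.+1 <= n.
  by rewrite block_start_succ // addnS; apply: block_end_lt.
have pal : rev (nth [::] pi j) = nth [::] pi j.
  by apply/eqP/(all_nthP [::] pi_pal); rewrite size_pi; lia.
exists (e + (n - block_start j.+1)).
  rewrite -letter_block_start //; apply: mirror.
  by rewrite -addnA subnK ?modnDr.
move=> t t_lt; rewrite (mirror (block_start j + (pi_len j - t.+1).+1)); last first.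
  have start_succ := block_start_succ j_lt.
  have -> : e + (n - block_start j.+1) + t.+1 + (block_start j + (pi_len j - t.+1).+1)
    = e + n by lia.
  by rewrite modnDr.
by rewrite !letter_block_pi ?(nth_palindrome x0 pal t_lt) //; lia.
Qed.

Hypothesis a_sorted : sorted (fun x y => (x < y)%O) a.

Lemma nth_a_lt j j' : j < j' -> j' < k -> (nth x0 a j < nth x0 a j')%O.
Proof.
move=> jj' j'_lt; apply: (sorted_ltn_nth lt_trans) => //.
by rewrite inE (ltn_trans jj').
Qed.

Lemma nth_a_inj j j' : j < k -> j' < k -> nth x0 a j = nth x0 a j' -> j = j'.
Proof.
move=> j_lt j'_lt eq_a; case: (ltngtP j j') => // [jj'|j'j].
- by have := nth_a_lt jj' j'_lt; rewrite eq_a ltxx.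
- by have := nth_a_lt j'j j_lt; rewrite eq_a ltxx.
Qed.

Local Notation start j := (least_pos (letter (block_start j))).

Lemma inner_not_least_rot j m : j < k -> m < pi_len j -> ~~ least_rot (start j + m.+1).
Proof.
move=> j_lt m_lt; have len_gt0 : 0 < pi_len j by lia.
have [q letter_q mirror_q] := mirror_block j_lt len_gt0.
have len_le : pi_len j <= n by have := block_end_lt j_lt; lia.
have lt_q : ltrot q.+1 (start j).+1.
  apply: (ltrot_succ_of_letter w_pc); rewrite letter_least_pos letter_block_start // letter_q.
  by rewrite nth_a_lt // succ_lt_of_pi_len.
have le_start : lex_le (rotn (start j).+1) (rotn (block_start j).+1).
  by apply: lex_le_rotn_succ; [rewrite letter_least_pos | apply: lex_le_least_pos].
have same_prefix : take (pi_len j) (rotn (start j).+1) = take (pi_len j) (rotn q.+1).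
  apply: lex_le_take (andP lt_q).1 le_start _; rewrite !take_rotn //.
  by apply/eq_in_map => t; rewrite mem_iota add0n => t_lt; rewrite !addSnnS mirror_q.
have same_letters t : t < pi_len j -> letter (q.+1 + t) = letter ((start j).+1 + t).
  move=> t_lt; move/(congr1 (nth x0 ^~ t)): same_prefix.
  by rewrite !nth_take // !nth_rotn //; apply: leq_trans len_le.
rewrite -addSnnS; apply: (@not_least_rot (q.+1 + m)); last exact: same_letters.
by apply: ltrot_shift lt_q _ => t t_lt; apply: same_letters; apply: ltn_trans m_lt.
Qed.

Lemma start_offset_inj j1 j2 t1 t2 : j1 < k -> j2 < k ->
  t1 <= pi_len j1 -> t2 <= pi_len j2 ->
  start j1 + t1 = start j2 + t2 %[mod n] -> j1 = j2 /\ t1 = t2.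
Proof.
wlog t12 : j1 j2 t1 t2 / t1 <= t2.
  move=> H j1_lt j2_lt t1_le t2_le eq12; case: (leqP t1 t2) => [t12|/ltnW t21].
    exact: H.
  by have [-> ->] := H j2 j1 t2 t1 t21 j2_lt j1_lt t2_le t1_le (esym eq12).
move=> j1_lt j2_lt t1_le t2_le eq12.
have eq12' : start j1 = start j2 + (t2 - t1) %[mod n].
  by apply/eqP; rewrite -(eqn_modDr t1) -addnA subnK //; apply/eqP.
have [t_lt|t_eq] := ltnP t1 t2.
  have m_lt : (t2 - t1).-1 < pi_len j2 by lia.
  have := inner_not_least_rot j2_lt m_lt.
  by rewrite prednK ?subn_gt0 // -(eq_least_rot eq12') least_rot_least_pos.
have {t_eq t12} t21 : t2 = t1 by lia.
subst t2.
split => //; apply: nth_a_inj => //; rewrite -!letter_block_start //.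
rewrite subnn addn0 !modn_small ?(proj1 (least_pos_spec _)) // in eq12'.
by rewrite -letter_least_pos eq12' letter_least_pos.
Qed.

Lemma start_offset_onto p : p < n ->
  exists j t, [/\ j < k, t <= pi_len j & start j + t = p %[mod n]].
Proof.
move=> p_lt; pose sh := shape blocks.
have reshape_bounds q : q < n ->
    reshape_index sh q < k /\ reshape_offset sh q <= pi_len (reshape_index sh q).
  rewrite w_blocks size_flatten => q_lt; have := reshape_indexP q_lt.
  rewrite size_map size_sf_blocks => r_lt; split => //.
  by have := reshape_offsetP q_lt; rewrite nth_shape_blocks.
pose f q := (start (reshape_index sh q) + reshape_offset sh q) %% n.
have f_inj : {in iota 0 n &, injective f}.
  move=> q1 q2; rewrite !mem_iota /= => q1_lt q2_lt eq_f.
  have [r1 o1] := reshape_bounds _ q1_lt; have [r2 o2] := reshape_bounds _ q2_lt.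
  have [eq_r eq_o] := start_offset_inj r1 r2 o1 o2 eq_f.
  by rewrite -(reshape_indexK sh q1) -(reshape_indexK sh q2) eq_r eq_o.
have f_lt q : q < n -> f q < n by rewrite ltn_mod.
have [q q_lt f_q] := inj_iota_onto f_inj f_lt p_lt.
have [r_lt o_le] := reshape_bounds q q_lt.
by exists (reshape_index sh q), (reshape_offset sh q); rewrite (modn_small p_lt) -f_q.
Qed.

Lemma start_block_end j : j < k ->
  exists2 j', j' < k & start j + (pi_len j).+1 = start j' %[mod n].
Proof.
move=> j_lt; have p_lt : (start j + (pi_len j).+1) %% n < n by rewrite ltn_mod.
have [j' [[|t] [j'_lt t_le eq_t]]] := start_offset_onto p_lt.
  by exists j'; rewrite // -[start j']addn0 eq_t modn_mod.
have : start j' + t + 1 = start j + pi_len j + 1 %[mod n].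
  by rewrite -!addnA !addn1 eq_t modn_mod.
move/eqP; rewrite eqn_modDr => /eqP /(start_offset_inj j'_lt j_lt (ltnW t_le) (leqnn _)).
by case=> eq_j eq_t'; move: t_le; rewrite eq_j eq_t' ltnn.
Qed.

Lemma least_pos_block_start j : j < k -> start j = block_start j.
Proof.
elim: j => [|j IH] j_lt; first by rewrite /block_start take0 least_pos_letter0.
have j_lt' := ltnW j_lt; have [j' j'_lt] := start_block_end j_lt'.
rewrite IH // -block_start_succ // => eq_j'.
have j'_eq : j' = j.+1.
  apply: nth_a_inj => //; rewrite -!letter_block_start //.
  by rewrite -letter_least_pos -(eq_letter eq_j').
have block_lt : block_start j.+1 < n.
  exact: leq_ltn_trans (leq_addr _ _) (block_end_lt j_lt).
have start_lt := (least_pos_spec (block_start j.+1)).1.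
by move: eq_j'; rewrite j'_eq !modn_small // => ->.
Qed.

End Factorization.

End CyclicWord.

Theorem lemma4p6 (d : Order.disp_t) (T : orderType d) (w a : seq T)
  (pi : seq (seq T)) :
  lyndon w -> perfectly_clustering w ->
  palindromic_special_factorization w a pi ->
  forall (x0 : T) (i : nat), i < size a ->
    let u := flatten (rot i (sf_blocks a pi)) in
    [/\ conjugate u w,
        ohead u = Some (nth x0 a i) &
        forall v, conjugate v w -> ohead v = Some (nth x0 a i) -> lex_le u v].
Proof.
move=> w_lyndon [w_prim w_pc] [[a_sorted _ size_pi w_blocks] pi_pal] x0 i i_lt u.
have w_gt0 := primitive_size_gt0 w_prim.
have u_rotn : u = rotn x0 w (block_start a pi i).
  exact: (flatten_rot_blocks x0 size_pi w_blocks i_lt).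
have letter_u := letter_block_start x0 size_pi w_blocks i_lt.
have least_u := least_pos_block_start x0 w_gt0 w_prim w_lyndon size_pi w_blocks
  w_pc pi_pal a_sorted i_lt.
split.
- exists (flatten (take i (sf_blocks a pi))), (flatten (drop i (sf_blocks a pi))).
  by rewrite /u -!flatten_cat cat_take_drop.
- by rewrite u_rotn ohead_rotn // letter_u.
move=> v /(conjugate_rotn x0) [p _ ->]; rewrite ohead_rotn // => -[letter_p].
by rewrite u_rotn -least_u letter_u -letter_p lex_le_least_pos.
Qed.
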